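(* For any menu $M=\{(q_i,t_i)\}$ of threshold certificates offered by the certifier, in the resulting equilibrium market outcome each producer type $\psi$ trades with consumer type $\phi(\psi)$, where $F(\phi(\psi))=G(\psi)$ (as cumulative distribution functions). The quality level at which $\psi$ and $\phi(\psi)$ trade is a menu threshold $q_i$ maximizing $f(q_i;\phi(\psi))-g(q_i;\psi)-t_i$, and this level is weakly increasing in $\psi$.
   Context: Certification market. Producers have types $\psi\in\mathbb{R}_+$ distributed by an atomless probability measure $G$ with compact support; consumers have types $\phi\in\mathbb{R}_+$ distributed by an atomless probability measure $F$ with compact support. Goods have quality $q\in[0,1]$. Production cost $g(q;\psi)$ is weakly convex and non-decreasing in $q$ with $g(0;\psi)=0$; consumer value $f(q;\phi)$ is weakly concave and non-decreasing in $q$ with $f(0;\phi)=0$, $0\le f\le1$. Strict single-crossing: for all $\phi_1<\phi_2$, $q_1<q_2$: $f(q_2;\phi_2)-f(q_1;\phi_2)>f(q_2;\phi_1)-f(q_1;\phi_1)$; for all $\psi_1<\psi_2$, $q_1<q_2$: $g(q_2;\psi_2)-g(q_1;\psi_2)<g(q_2;\psi_1)-g(q_1;\psi_1)$. Utilities are quasilinear (consumer: $f(q;\phi)-p$; producer: $p-g(q;\psi)-t$ where $t$ is the transfer to the certifier). Threshold certificates: every certificate has the form $[q,1]$, identified with $q$; a menu is $M=\{(q_i,t_i)\}$, always including $(0,0)$; a producer who selects threshold $q$ produces at quality exactly $q$ and pays $t$. Producers choose certificates simultaneously (an equilibrium is a strategy $\psi\mapsto\Gamma(\psi)\in M$ from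 which no producer can profitably deviate), then goods trade in a competitive (Walrasian) market equilibrium in which each consumer buys a utility-maximizing quality level at market prices and markets clear. *)

From HB Require Import structures.
From mathcomp Require Import all_boot all_order all_algebra.
From mathcomp Require Import all_classical all_reals all_analysis.
Set Implicit Arguments. Unset Strict Implicit. Unset Printing Implicit Defensive.
Import Order.TTheory GRing.Theory Num.Theory.
Import numFieldNormedType.Exports.
Local Open Scope classical_set_scope.
Local Open Scope ring_scope.

Definition atomless (R : realType) (mu : probability R R) : Prop :=
  forall x : R, mu [set x] = 0%E.

Definition compact_support_nonneg (R : realType) (mu : probability R R) : Prop :=
  exists K : set R, compact K /\ K `<=` `[0, +oo[%classic /\ mu (~` K) = 0%E.

Definition cdfm (R : realType) (mu : probability R R) (x : R) : \bar R :=
  mu `]-oo, x]%classic.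

(** [q] ranges over qualities in [0,1]; types over R_+. *)
Definition wconvex_on01 (R : realType) (h : R -> R) : Prop :=
  forall x y l : R, 0 <= x <= 1 -> 0 <= y <= 1 -> 0 <= l <= 1 ->
    h (l * x + (1 - l) * y) <= l * h x + (1 - l) * h y.

Definition wconcave_on01 (R : realType) (h : R -> R) : Prop :=
  wconvex_on01 (fun x => - h x).

Definition nondecr_on01 (R : realType) (h : R -> R) : Prop :=
  forall x y : R, 0 <= x -> x <= y -> y <= 1 -> h x <= h y.

(** Production cost [g q psi] and consumer value [f q phi]. *)
Definition cost_assumptions (R : realType) (g : R -> R -> R) : Prop :=
  (forall psi, 0 <= psi ->
     [/\ wconvex_on01 (fun q => g q psi), nondecr_on01 (fun q => g q psi)
       & g 0 psi = 0]) /\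
  (forall psi1 psi2 q1 q2, 0 <= psi1 -> psi1 < psi2 ->
     0 <= q1 -> q1 < q2 -> q2 <= 1 ->
     g q2 psi2 - g q1 psi2 < g q2 psi1 - g q1 psi1).

Definition value_assumptions (R : realType) (f : R -> R -> R) : Prop :=
  (forall phi, 0 <= phi ->
     [/\ wconcave_on01 (fun q => f q phi), nondecr_on01 (fun q => f q phi),
         f 0 phi = 0
       & forall q, 0 <= q <= 1 -> 0 <= f q phi <= 1]) /\
  (forall phi1 phi2 q1 q2, 0 <= phi1 -> phi1 < phi2 ->
     0 <= q1 -> q1 < q2 -> q2 <= 1 ->
     f q2 phi2 - f q1 phi2 > f q2 phi1 - f q1 phi1).

(** A menu of threshold certificates: a set of pairs (threshold q, fee t),
    thresholds in [0,1], always containing (0,0). *)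
Definition is_menu (R : realType) (M : set (R * R)) : Prop :=
  M (0, 0) /\ (forall m, M m -> 0 <= m.1 <= 1).

(** Equilibrium given menu [M]:
    - [Gam psi] : certificate chosen by producer type psi (produces at quality
      (Gam psi).1 and pays (Gam psi).2),
    - [p q] : market price of a good of quality q,
    - [c phi] : quality bought by consumer type phi. *)
Definition equilibrium (R : realType) (G F : probability R R)
  (g f : R -> R -> R) (M : set (R * R))
  (Gam : R -> R * R) (p : R -> R) (c : R -> R) : Prop :=
  [/\ (forall psi, 0 <= psi -> M (Gam psi)) /\
      (forall psi, 0 <= psi -> forall m, M m ->
         p m.1 - g m.1 psi - m.2 <= p (Gam psi).1 - g (Gam psi).1 psi - (Gam psi).2),
      (forall phi, 0 <= phi -> exists2 m, M m & c phi = m.1),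
      (forall phi, 0 <= phi -> forall m, M m ->
         f m.1 phi - p m.1 <= f (c phi) phi - p (c phi)),
      measurable_fun setT (fun psi => (Gam psi).1) /\
      measurable_fun setT c
    & (forall A : set R, measurable A ->
         G ((fun psi => (Gam psi).1) @^-1` A) = F (c @^-1` A))].

(** An agent whose payoff has strictly increasing
      differences in (quality, type) chooses, from any fixed menu, a quality
      that is nondecreasing in its type.  Strict single crossing of [-g] and
      [f] therefore makes both the producers' choice [psi |-> (Gam psi).1]
      and the consumers' choice [c] nondecreasing.

    If two nondecreasing maps [X], [Y] push two laws
      [mu], [nu] on the half-line to the same law, and [mu] is atomless,
      then for [mu]-almost every [x], every [y] of the same quantile
      ([nu(]-oo,y]) = mu(]-oo,x])]) satisfies [Y y = X x].  Otherwise a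
      rational threshold [r] separates [X x] and [Y y], and comparing the
      masses below [r] shows that [x] is an essential endpoint of the level
      set [X^-1(]-oo,r])] or [X^-1(]r,+oo[)]; such endpoints form null sets.

    With [X], [Y] the trading qualities of producers and consumers, market
    clearing gives the common law; adding the two optimality conditions of
    matched partners shows that their common quality maximises joint surplus. *)

From HB Require Import structures.
From mathcomp Require Import all_boot all_order all_algebra.
From mathcomp Require Import all_classical all_reals all_analysis.
From mathcomp Require Import lra.
Import Order.TTheory GRing.Theory Num.Theory.
Import numFieldNormedType.Exports.
Set Implicit Arguments. Unset Strict Implicit. Unset Printing Implicit Defensive.
Local Open Scope classical_set_scope.
Local Open Scope ring_scope.

Section monotone_choice.
Variable R : realType.

Definition increasing_differences (h : R -> R -> R) : Prop :=
  forall a1 a2 q1 q2, 0 <= a1 -> a1 < a2 -> 0 <= q1 -> q1 < q2 -> q2 <= 1 ->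
    h q2 a1 - h q1 a1 < h q2 a2 - h q1 a2.

Lemma optimal_choice_nondecreasing (I : Type) (A : set I) (q k : I -> R)
    (h : R -> R -> R) (choice : R -> I) :
  (forall i, A i -> 0 <= q i <= 1) -> increasing_differences h ->
  (forall a, 0 <= a -> A (choice a)) ->
  (forall a, 0 <= a -> forall i, A i ->
     h (q i) a + k i <= h (q (choice a)) a + k (choice a)) ->
  forall a1 a2, 0 <= a1 -> a1 <= a2 -> q (choice a1) <= q (choice a2).
Proof.
move=> qA hinc Achoice opt a1 a2 a1_ge0.
rewrite le_eqVlt => /orP[/eqP <-//|a12]; rewrite leNgt; apply/negP => q21.
have a2_ge0 : 0 <= a2 by rewrite (le_trans a1_ge0 (ltW a12)).
have /andP[_ q1_le1] := qA _ (Achoice _ a1_ge0).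
have /andP[q2_ge0 _] := qA _ (Achoice _ a2_ge0).
have := hinc _ _ _ _ a1_ge0 a12 q2_ge0 q21 q1_le1.
have := opt _ a1_ge0 _ (Achoice _ a2_ge0).
have := opt _ a2_ge0 _ (Achoice _ a1_ge0).
lra.
Qed.

End monotone_choice.

Lemma producer_choice_nondecreasing (R : realType) (G F : probability R R)
    (g f : R -> R -> R) (M : set (R * R)) (Gam : R -> R * R) (p c : R -> R) :
  cost_assumptions g -> is_menu M -> equilibrium G F g f M Gam p c ->
  forall psi1 psi2, 0 <= psi1 -> psi1 <= psi2 -> (Gam psi1).1 <= (Gam psi2).1.
Proof.
move=> [_ g_dec] [_ Mq] [[GamM Gopt] _ _ _ _].
apply: (@optimal_choice_nondecreasing _ _ M fst (fun m => p m.1 - m.2)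
  (fun q psi => - g q psi)) => //.
- move=> a1 a2 q1 q2 a1_ge0 a12 q1_ge0 q12 q2_le1.
  by have := g_dec _ _ _ _ a1_ge0 a12 q1_ge0 q12 q2_le1; lra.
- by move=> psi psi_ge0 m Mm; have := Gopt _ psi_ge0 _ Mm; lra.
Qed.

Lemma consumer_choice_nondecreasing (R : realType) (G F : probability R R)
    (g f : R -> R -> R) (M : set (R * R)) (Gam : R -> R * R) (p c : R -> R) :
  value_assumptions f -> is_menu M -> equilibrium G F g f M Gam p c ->
  forall phi1 phi2, 0 <= phi1 -> phi1 <= phi2 -> c phi1 <= c phi2.
Proof.
move=> [_ f_inc] [_ Mq] [_ cM copt _ _].
apply: (@optimal_choice_nondecreasing _ _ (fst @` M) id (fun q => - p q) f)
  => //.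
- by move=> _ [m Mm <-]; exact: Mq.
- by move=> phi /cM[m Mm ->]; exists m.
- by move=> phi phi_ge0 _ [m Mm <-]; have := copt _ phi_ge0 _ Mm; lra.
Qed.

Section null_sets.
Context (R : realType) (mu : {measure set R -> \bar R}).

Lemma ae_not (N : set R) : mu.-negligible N -> {ae mu, forall x, ~ N x}.
Proof. by apply: negligibleS => x /= /contrapT. Qed.

Lemma ae_forall_countable (I : countType) (P : I -> R -> Prop) :
  (forall i, {ae mu, forall x, P i x}) -> {ae mu, forall x, forall i, P i x}.
Proof.
move=> aeP.
have : {ae mu, forall x, forall n,
    if pickle_inv n is Some i then P i x else True}.
  by apply: ae_foralln => n; case: (pickle_inv n) => [i|]; [exact: aeP|exact: aeW].
by apply: filterS => x Px i; have := Px (pickle i); rewrite pickleK_inv.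
Qed.

Lemma ae_upper_part (S : set R) : measurable S -> (forall x, mu [set x] = 0%E) ->
  {ae mu, forall x, S x -> mu (S `&` `]x, +oo[) != 0%E}.
Proof.
move=> mS atomless.
pose bad x := S x /\ mu (S `&` `]x, +oo[) = 0%E.
have mpart y : measurable (S `&` `]y, +oo[) by apply: measurableI.
(* the least bad point, if any, is an atom *)
have least_null : {ae mu, forall x, ~ (bad x /\ forall y, bad y -> x <= y)}.
  apply: ae_not.
  have [[x0 [bx0 least0]]|] :=
    pselect (exists x0, bad x0 /\ forall y, bad y -> x0 <= y).
    apply: (negligibleS _ ((negligibleP _ (measurable_set1 x0)).2 (atomless x0))).
    by move=> x [bx least]; apply/eqP; rewrite eq_le least0 // least.
  by move=> none; apply: negligibleS (negligible_set0 mu) => x ?; apply: none; exists x.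
(* the other bad points lie in null parts above rationals *)
have rat_null : {ae mu, forall x, forall r : rat,
    ~ (S x /\ ratr r < x /\ mu (S `&` `]ratr r, +oo[) = 0%E)}.
  apply: ae_forall_countable => r; apply: ae_not.
  have [r_null|r_pos] := pselect (mu (S `&` `]ratr r, +oo[) = 0%E).
    apply: negligibleS ((negligibleP _ (mpart _)).2 r_null) => x [Sx [rx _]].
    by split => //; rewrite /= in_itv /= rx.
  by apply: negligibleS (negligible_set0 mu) => x [_ [_ /r_pos]].
move: least_null rat_null; apply: filterS2 => x not_least not_rat Sx.
apply/eqP => part0; apply: not_least; split => // y [Sy party].
rewrite leNgt; apply/negP => yx.
have [r] := rat_in_itvoo yx; rewrite in_itv /= => /andP[yr rx].
apply: (not_rat r); split => //; split => //.
apply: (subset_measure0 (mpart _) (mpart _) _ party) => z [Sz].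
by rewrite /= !in_itv /= !andbT => rz; split => //; rewrite (lt_trans yr rz).
Qed.

(** Almost every point of a measurable set [S] leaves a nonnull part of [S]
    at or below it; no atomlessness is needed since the point itself counts. *)
Lemma ae_lower_part (S : set R) : measurable S ->
  {ae mu, forall x, S x -> mu (S `&` `]-oo, x]) != 0%E}.
Proof.
move=> mS.
pose bad x := S x /\ mu (S `&` `]-oo, x]) = 0%E.
have mpart y : measurable (S `&` `]-oo, y]) by apply: measurableI.
(* the greatest bad point, if any, bounds a null part containing all such *)
have greatest_null : {ae mu, forall x, ~ (bad x /\ forall y, bad y -> y <= x)}.
  apply: ae_not.
  have [[x0 [[_ bx0] greatest0]]|] :=
    pselect (exists x0, bad x0 /\ forall y, bad y -> y <= x0).
    apply: (negligibleS _ ((negligibleP _ (mpart x0)).2 bx0)).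
    by move=> x [[Sx bx] _]; split => //; rewrite /= in_itv /= greatest0.
  by move=> none; apply: negligibleS (negligible_set0 mu) => x ?; apply: none; exists x.
(* the other bad points lie in null parts below rationals *)
have rat_null : {ae mu, forall x, forall r : rat,
    ~ (S x /\ x < ratr r /\ mu (S `&` `]-oo, ratr r]) = 0%E)}.
  apply: ae_forall_countable => r; apply: ae_not.
  have [r_null|r_pos] := pselect (mu (S `&` `]-oo, ratr r]) = 0%E).
    apply: negligibleS ((negligibleP _ (mpart _)).2 r_null) => x [Sx [xr _]].
    by split => //; rewrite /= in_itv /= ltW.
  by apply: negligibleS (negligible_set0 mu) => x [_ [_ /r_pos]].
move: greatest_null rat_null; apply: filterS2 => x not_greatest not_rat Sx.
apply/eqP => part0; apply: not_greatest; split => // y [Sy party].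
rewrite leNgt; apply/negP => xy.
have [r] := rat_in_itvoo xy; rewrite in_itv /= => /andP[xr ry].
apply: (not_rat r); split => //; split => //.
apply: (subset_measure0 (mpart _) (mpart _) _ party) => z [Sz].
by rewrite /= !in_itv /= => zr; split => //; rewrite (le_trans zr (ltW ry)).
Qed.

Lemma le_measure_up_to_null (A B N : set R) :
  measurable A -> measurable B -> measurable N -> mu N = 0%E ->
  A `<=` B `|` N -> (mu A <= mu B)%E.
Proof.
move=> mA mB mN N0 AB.
apply: (le_trans (le_measure _ _ _ AB)); rewrite ?inE //; first exact: measurableU.
apply: (le_trans (measureU2 mu mB mN)); by move: N0 => /= ->; rewrite adde0.
Qed.

Lemma measure_excess0 (A C : set R) : measurable A -> measurable C ->
  A `&` C = set0 -> mu A \is a fin_num -> (mu (A `|` C) <= mu A)%E ->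
  mu C = 0%E.
Proof.
move=> mA mC AC0 finA; rewrite measureU // -[leRHS]adde0 leeD2lE // => C_le0.
by apply/eqP; rewrite -measure_le0.
Qed.

End null_sets.

Lemma negative_null (R : realType) (mu : probability R R) :
  compact_support_nonneg mu -> mu `]-oo, 0[%classic = 0%E.
Proof.
move=> [K [cK [K_ge0 K0]]]; apply: (subset_measure0 _ _ _ K0) => //.
- apply: measurableC; apply: measurable_realfun.closed_measurable.
  exact: compact_closed cK.
- move=> x; rewrite /= in_itv /= => x_lt0 Kx; have := K_ge0 _ Kx.
  by rewrite /= in_itv /= andbT leNgt x_lt0.
Qed.

Lemma ae_nonneg (R : realType) (mu : probability R R) :
  mu `]-oo, 0[%classic = 0%E -> {ae mu, forall x, 0 <= x}.
Proof.
move=> neg0; apply: (negligibleS _ ((negligibleP _ (measurable_itv _)).2 neg0)).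
by move=> x /= /negP; rewrite -ltNge => x_lt0; rewrite in_itv.
Qed.

Section quantile_matching.
Context (R : realType) (mu nu : probability R R) (X Y : R -> R).
Hypotheses (mu_atomless : atomless mu)
  (mu_neg : mu `]-oo, 0[%classic = 0%E) (nu_neg : nu `]-oo, 0[%classic = 0%E)
  (X_mono : forall x1 x2, 0 <= x1 -> x1 <= x2 -> X x1 <= X x2)
  (Y_mono : forall y1 y2, 0 <= y1 -> y1 <= y2 -> Y y1 <= Y y2)
  (mX : measurable_fun setT X) (mY : measurable_fun setT Y)
  (same_law : forall A, measurable A -> mu (X @^-1` A) = nu (Y @^-1` A)).

Let mXpre A : measurable A -> measurable (X @^-1` A).
Proof. by move=> mA; rewrite -[X @^-1` A]setTI; exact: mX. Qed.

Let mYpre A : measurable A -> measurable (Y @^-1` A).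
Proof. by move=> mA; rewrite -[Y @^-1` A]setTI; exact: mY. Qed.

Lemma no_mass_above (x y r : R) : 0 <= x -> 0 <= y ->
  cdfm nu y = cdfm mu x -> X x <= r < Y y ->
  mu (X @^-1` `]-oo, r] `&` `]x, +oo[) = 0%E.
Proof.
move=> x_ge0 y_ge0 same_quantile /andP[Xxr rYy].
have mC : measurable (X @^-1` `]-oo, r] `&` `]x, +oo[).
  by apply: measurableI; [exact: mXpre|exact: measurable_itv].
apply: (measure_excess0 (measurable_itv `]-oo, x]) mC).
- apply/seteqP; split => // z [] /=; rewrite !in_itv /= andbT => zx [_].
  by rewrite ltNge zx.
- exact: fin_num_measure.
have below_r : (mu (`]-oo, x] `|` (X @^-1` `]-oo, r] `&` `]x, +oo[))
    <= mu (X @^-1` `]-oo, r]))%E.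
  apply: (le_measure_up_to_null _ _ (measurable_itv `]-oo, 0[) mu_neg).
  - by apply: measurableU => //; exact: measurable_itv.
  - exact: (mXpre (measurable_itv _)).
  - move=> z [|[]//]; [|by left]; rewrite /= in_itv /= => zx.
    have [z_ge0|] := leP 0 z; last by right; rewrite /= in_itv.
    by left; rewrite /= in_itv /= (le_trans (X_mono z_ge0 zx)).
apply: (le_trans below_r); rewrite same_law; last exact: measurable_itv.
move: same_quantile; rewrite /cdfm /= => <-.
apply: le_measure; rewrite ?inE;
  [exact: (mYpre (measurable_itv _))|exact: measurable_itv|].
move=> z; rewrite /= !in_itv /= => Yzr; rewrite leNgt; apply/negP => yz.
by have := Y_mono y_ge0 (ltW yz); rewrite leNgt (le_lt_trans Yzr rYy).
Qed.

Lemma no_mass_below (x y r : R) : 0 <= x -> 0 <= y ->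
  cdfm nu y = cdfm mu x -> Y y <= r < X x ->
  mu (X @^-1` `]r, +oo[ `&` `]-oo, x]) = 0%E.
Proof.
move=> x_ge0 y_ge0 same_quantile /andP[Yyr rXx].
have mA : measurable (X @^-1` `]-oo, r]) by exact: (mXpre (measurable_itv _)).
have mC : measurable (X @^-1` `]r, +oo[ `&` `]-oo, x]).
  by apply: measurableI; [exact: (mXpre (measurable_itv _))|exact: measurable_itv].
apply: (measure_excess0 mA mC).
- apply/seteqP; split => // z [] /=; rewrite !in_itv /= andbT => Xzr [rXz _].
  by have := lt_le_trans rXz Xzr; rewrite ltxx.
- exact: fin_num_measure.
have below_x : (mu (X @^-1` `]-oo, r] `|` (X @^-1` `]r, +oo[ `&` `]-oo, x]))
    <= mu `]-oo, x]%classic)%E.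
  apply: le_measure; rewrite ?inE; [exact: measurableU|exact: measurable_itv|].
  move=> z [|[]//]; rewrite /= !in_itv /= => Xzr.
  rewrite leNgt; apply/negP => xz.
  by have := X_mono x_ge0 (ltW xz); rewrite leNgt (le_lt_trans Xzr rXx).
apply: (le_trans below_x); move: same_quantile; rewrite /cdfm /= => <-.
rewrite same_law; last exact: measurable_itv.
apply: (le_measure_up_to_null _ _ (measurable_itv `]-oo, 0[) nu_neg).
- exact: measurable_itv.
- exact: (mYpre (measurable_itv _)).
- move=> z; rewrite /= in_itv /= => zy.
  have [z_ge0|] := leP 0 z; last by right; rewrite /= in_itv.
  by left; rewrite /= in_itv /= (le_trans (Y_mono z_ge0 zy)).
Qed.

Theorem quantile_matching :
  {ae mu, forall x, forall y, 0 <= y -> cdfm nu y = cdfm mu x -> Y y = X x}.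
Proof.
have above := ae_forall_countable (fun r : rat =>
  ae_upper_part (mXpre (measurable_itv `]-oo, ratr r])) mu_atomless).
have below := ae_forall_countable (fun r : rat =>
  ae_lower_part mu (mXpre (measurable_itv `]ratr r, +oo[))).
move: (ae_nonneg mu_neg) above below.
apply: filterS3 => x x_ge0 above_x below_x y y_ge0 same_q.
apply/eqP; rewrite eq_le; apply/andP; split; rewrite leNgt; apply/negP => XY.
- have [r] := rat_in_itvoo XY; rewrite in_itv /= => /andP[Xr rY].
  have := above_x r; rewrite /= in_itv /= ltW // => /(_ isT)/eqP; apply.
  by apply: (no_mass_above x_ge0 y_ge0 same_q); rewrite ltW.
- have [r] := rat_in_itvoo XY; rewrite in_itv /= => /andP[Yr rX].
  have := below_x r; rewrite /= in_itv /= andbT rX => /(_ isT)/eqP; apply.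
  by apply: (no_mass_below x_ge0 y_ge0 same_q); rewrite ltW.
Qed.

End quantile_matching.

Theorem corollary1 (R : realType) (G F : probability R R)
  (g f : R -> R -> R) (M : set (R * R))
  (Gam : R -> R * R) (p : R -> R) (c : R -> R) :
  atomless G -> compact_support_nonneg G ->
  atomless F -> compact_support_nonneg F ->
  cost_assumptions g -> value_assumptions f ->
  is_menu M ->
  equilibrium G F g f M Gam p c ->
  (forall psi1 psi2, 0 <= psi1 -> psi1 <= psi2 -> (Gam psi1).1 <= (Gam psi2).1) /\
  {ae G, forall psi, forall phi, 0 <= phi -> cdfm F phi = cdfm G psi ->
     c phi = (Gam psi).1 /\
     (forall m, M m ->
        f m.1 phi - g m.1 psi - m.2 <= f (Gam psi).1 phi - g (Gam psi).1 psi - (Gam psi).2)}.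
Proof.
move=> G_atomless G_supp _ F_supp g_ok f_ok menu eqm.
have Gam_mono := producer_choice_nondecreasing g_ok menu eqm.
have c_mono := consumer_choice_nondecreasing f_ok menu eqm.
split => //.
have [[_ producer_opt] _ consumer_opt [mGam mc] clearing] := eqm.
have G_neg := negative_null G_supp; have F_neg := negative_null F_supp.
have matched := quantile_matching G_atomless G_neg F_neg Gam_mono c_mono mGam mc
  clearing.
move: (ae_nonneg G_neg) matched.
apply: filterS2 => psi psi_ge0 match_psi phi phi_ge0 q_eq.
have c_eq := match_psi _ phi_ge0 q_eq; split => // m Mm.
(* the partners' optimality conditions add up to joint-surplus maximisation *)
have := producer_opt _ psi_ge0 _ Mm; have := consumer_opt _ phi_ge0 _ Mm.
by rewrite c_eq; lra.
Qed.
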